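(* Let $f:E\to E'$ be an FD-homomorphism between two Feller-Dynkin processes with state spaces $E$ and $E'$. Let $R$ be the equivalence relation on $E\uplus E'$ given by \[ R=\{(x,y)\in E\times E : f(x)=f(y)\}\cup\{(x,y),(y,x) : x\in E,\ y\in E',\ f(x)=y\}\cup\{(y,y'):y,y'\in E',\ y=y'\}. \] Then $R$ is a bisimulation between the two Feller-Dynkin processes.
   Context: A Feller-Dynkin (FD) process consists of: a locally compact Hausdorff space $E$ with countable base and Borel $\sigma$-algebra; its one-point compactification $E_\partial=E\uplus\{\partial\}$; a strongly continuous semigroup $(\hat P_t)_{t\ge0}$ on $C_0(E)$ with $0\le f\le1\Rightarrow0\le\hat P_tf\le1$, with associated sub-Markov kernels $P_t$ ($\hat P_tf(x)=\int f(y)P_t(x,dy)$); the set $\Omega$ of trajectories (cadlag $\omega:[0,\infty)\to E_\partial$ such that $\omega(t-)=\partial$ or $\omega(t)=\partial$ implies $\omega(u)=\partial$ for all $u\ge t$) with $\mathcal{G}=\sigma(\omega\mapsto\omega(s): s\ge0)$; the probability measures $\mathbb{P}^x$ on $(\Omega,\mathcal{G})$, $x\in E_\partial$, uniquely determined by $\mathbb{P}^x(\omega(0)\in dx_0,\omega(t_1)\in dx_1,\dots,\omega(t_n)\in dx_n)=\delta_x(dx_0)P^{+\partial}_{t_1}(x_0,dx_1)\cdots P^{+\partial}_{t_n-t_{n-1}}(x_{n-1},dx_n)$, where $P^{+\partial}_t(x,\{\partial\})=1-P_t(x,E)$, $P^{+\partial}_t(\partial,\{\partial\})=1$; and a map $obs:E\to2^{AP}$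 ($AP$ finite set of atomic propositions), with $obs(\partial)=\partial$. Given FD processes $(E,\Omega,\mathcal{G},\mathbb{P}^x,obs)$ and $(E',\Omega',\mathcal{G}',\mathbb{P}'^{x},obs')$, an FD-homomorphism is a continuous map $f:E\to E'$ (extended by $f(\partial)=\partial$) such that $obs=obs'\circ f$ and for all $x\in E$ and all $B'\in\mathcal{G}'$, $\mathbb{P}'^{f(x)}(B')=\mathbb{P}^x(\{\omega\in\Omega: f\circ\omega\in B'\})$. Given two FD processes with data indexed by $1,2$ (state spaces $E_1,E_2$, trajectory spaces $\Omega_1,\Omega_2$, $\sigma$-algebras $\mathcal{G}_1,\mathcal{G}_2$, measures $\mathbb{P}^x_1,\mathbb{P}^x_2$, maps $obs_1,obs_2$), a bisimulation between them is an equivalence relation $R$ on $E_1\uplus E_2$ such that whenever $x\,R\,y$ with $x\in E_i$, $y\in E_j$: (i) $obs_i(x)=obs_j(y)$; (ii) for all $B_1\in\mathcal{G}_1$, $B_2\in\mathcal{G}_2$ satisfying ''for all $k,l\in\{1,2\}$, all $\omega_k\in B_k$ and all $\omega_l\in\Omega_l$, if $\omega_k(t)\,R\,\omega_l(t)$ for all $t\ge0$ ($\partial$ related to itself) then $\omega_l\in B_l$'', we have $\mathbb{P}^x_i(B_i)=\mathbb{P}^y_j(B_j)$. *)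

From HB Require Import structures.
From mathcomp Require Import all_boot all_order all_algebra.
From mathcomp Require Import all_classical all_reals all_analysis.
From mathcomp Require Import Rstruct Rstruct_topology.

Set Implicit Arguments.
Unset Strict Implicit.
Unset Printing Implicit Defensive.

Import Order.TTheory GRing.Theory Num.Theory.
Import numFieldNormedType.Exports.

Local Open Scope classical_set_scope.
Local Open Scope ring_scope.

Notation R := Rdefinitions.R.

(* one-point compactification E_partial = option E; the point [None] is the
   cemetery point \partial *)
Notation opc E := (one_point_compactification E).

Section FD.
Variable E : topologicalType.

Definition borelE : set (set E) := <<s @open E >>.
Definition borelP : set (set (opc E)) := <<s @open (opc E) >>.

Definition MP := g_sigma_algebraType (@open (opc E)).

Definition subprob_measure (mu : set E -> \bar R) : Prop :=
  [/\ mu set0 = 0%E,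
      (forall A, borelE A -> (0 <= mu A)%E),
      (forall F : (set E)^nat, (forall i, borelE (F i)) -> trivIset setT F ->
          (\sum_(0 <= i <oo) mu (F i))%E = mu (\bigcup_i F i))
    & (mu setT <= 1)%E].

Definition prob_measure_on {T : Type} (D : set T) (M : set (set T))
    (mu : set T -> \bar R) : Prop :=
  [/\ mu set0 = 0%E,
      (forall A, M A -> (0 <= mu A)%E),
      (forall F : (set T)^nat, (forall i, M (F i)) -> trivIset setT F ->
          (\sum_(0 <= i <oo) mu (F i))%E = mu (\bigcup_i F i))
    & mu D = 1%E].

Definition C0 (f : E -> R) : Prop :=
  continuous f /\
  forall eps : R, 0 < eps ->
    exists K : set E, compact K /\ forall x, ~ K x -> `|f x| < eps.

Definition ext0 (f : E -> R) (z : MP) : \bar R :=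
  match z with Some y => (f y)%:E | None => 0%E end.

Definition push (mu : set E -> \bar R) : set MP -> \bar R :=
  fun B => mu (Some @^-1` B).

Definition Pplus (P : R -> E -> set E -> \bar R) (t : R) (x : opc E)
    : set MP -> \bar R :=
  fun B => match x with
           | Some x' => (P t x' (Some @^-1` B) +
                          (1 - P t x' setT) * (\1_B None)%:E)%E
           | None => (\1_B None)%:E
           end.

(* iterated integral giving the finite dimensional distributions:
   l = [:: (d_1, A_1); ...; (d_n, A_n)] lists the time increments
   d_i = t_i - t_{i-1} and the sets A_i *)
Fixpoint fdd (P : R -> E -> set E -> \bar R) (l : seq (R * set (opc E)))
    (x : MP) : \bar R :=
  match l with
  | [::] => 1%E
  | (d, A) :: l' => (\int[Pplus P d x]_(z in (A : set MP)) fdd P l' z)%E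
  end.

Fixpoint fdd_event (l : seq (R * set (opc E))) (s : R) (w : R -> opc E) : Prop :=
  match l with
  | [::] => True
  | (d, A) :: l' => A (w (s + d)) /\ fdd_event l' (s + d) w
  end.

(* trajectories: cadlag paths [0,oo) -> E_partial, absorbed at \partial.
   A path is represented as a function R -> E_partial which is extended to
   negative times by its value at time 0 (convention). *)
Definition is_traj (w : R -> opc E) : Prop :=
  [/\ (forall t : R, t < 0 -> w t = w 0),
      (forall t : R, 0 <= t -> w @ t^'+ --> w t),
      (forall t : R, 0 < t -> cvg (w @ t^'-))
    & (forall t : R, 0 <= t ->
        (lim (w @ t^'-) = None \/ w t = None) ->
        forall u, t <= u -> w u = None)].

Definition Omega : set (R -> opc E) := is_traj.

Definition Gsig : set (set (R -> opc E)) :=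
  <<s Omega, (fun B => exists s (A : set (opc E)),
      [/\ 0 <= s, borelP A & B = Omega `&` ((fun w => w s) @^-1` A)]) >>.

End FD.

Record FDProcess (E : topologicalType) (AP : finType) := {
  fd_hausdorff : hausdorff_space E;
  fd_loc_compact : locally_compact [set: E];
  fd_second_countable : @second_countable E;
  Phat : R -> (E -> R) -> (E -> R);
  Pk : R -> E -> set E -> \bar R;
  Px : opc E -> set (R -> opc E) -> \bar R;
  obs : E -> {set AP};
  Phat_C0 : forall (t : R) f, 0 <= t -> C0 f -> C0 (Phat t f);
  Phat_linear : forall (t : R) (a : R) f g, 0 <= t -> C0 f -> C0 g ->
      Phat t (fun x => a * f x + g x) = (fun x => a * Phat t f x + Phat t g x);
  Phat_0 : forall f, C0 f -> Phat 0 f = f;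
  Phat_semigroup : forall (s t : R) f, 0 <= s -> 0 <= t -> C0 f ->
      Phat (s + t) f = Phat s (Phat t f);
  Phat_strong_cont : forall f, C0 f -> forall eps : R, 0 < eps ->
      exists2 d : R, 0 < d &
        forall t : R, 0 < t < d -> forall x, `|Phat t f x - f x| < eps;
  Phat_sub_markov : forall (t : R) f, 0 <= t -> C0 f -> (forall x, 0 <= f x <= 1) ->
      forall x, 0 <= Phat t f x <= 1;
  Pk_measure : forall (t : R) x, 0 <= t -> subprob_measure (Pk t x);
  Pk_measurable : forall (t : R) A, 0 <= t -> borelE A ->
      forall c : R, borelE [set x | (Pk t x A < c%:E)%E];
  Phat_Pk : forall (t : R) f x, 0 <= t -> C0 f ->
      (Phat t f x)%:E = (\int[push (Pk t x)]_(z in [set: MP E]) ext0 f z)%E;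
  Px_prob : forall x, prob_measure_on (@Omega E) (@Gsig E) (Px x);
  Px_fdd : forall x (A0 : set (opc E)) (l : seq (R * set (opc E))),
      borelP A0 -> all (fun p => `[< 0 < p.1 /\ borelP p.2 >]) l ->
      Px x [set w | @Omega E w /\ A0 (w 0) /\ fdd_event l 0 w] =
        ((\1_A0 x)%:E * fdd (Pk) l (x : MP E))%E
}.

Definition lift_path (E E' : topologicalType) (f : E -> E')
    (w : R -> opc E) : R -> opc E' := fun t => omap f (w t).

Definition FD_hom (E E' : topologicalType) (AP : finType)
    (X : FDProcess E AP) (X' : FDProcess E' AP) (f : E -> E') : Prop :=
  [/\ continuous f,
      (forall x, obs X x = obs X' (f x))
    & forall x (B' : set (R -> opc E')), @Gsig E' B' ->
        Px X' (Some (f x)) B' = Px X (Some x) [set w | @Omega E w /\ B' (lift_path f w)]].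

Definition rel_pt (E1 E2 Ek El : Type) (Rl : E1 + E2 -> E1 + E2 -> Prop)
    (ik : Ek -> E1 + E2) (il : El -> E1 + E2) (a : option Ek) (b : option El)
    : Prop :=
  match a, b with
  | None, None => True
  | Some a', Some b' => Rl (ik a') (il b')
  | _, _ => False
  end.

Definition rel_path (E1 E2 Ek El : Type) (Rl : E1 + E2 -> E1 + E2 -> Prop)
    (ik : Ek -> E1 + E2) (il : El -> E1 + E2)
    (wk : R -> option Ek) (wl : R -> option El) : Prop :=
  forall t : R, 0 <= t -> rel_pt Rl ik il (wk t) (wl t).

Definition equivalence_rel {T : Type} (Rl : T -> T -> Prop) : Prop :=
  [/\ forall x, Rl x x, (forall x y, Rl x y -> Rl y x)
    & forall x y z, Rl x y -> Rl y z -> Rl x z].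

Definition bisimulation (E1 E2 : topologicalType) (AP : finType)
    (X1 : FDProcess E1 AP) (X2 : FDProcess E2 AP)
    (Rl : E1 + E2 -> E1 + E2 -> Prop) : Prop :=
  let sobs (z : E1 + E2) := match z with inl x => obs X1 x | inr y => obs X2 y end in
  let sprob (z : E1 + E2) B1 B2 :=
    match z with inl x => Px X1 (Some x) B1 | inr y => Px X2 (Some y) B2 end in
  let i1 := @inl E1 E2 in let i2 := @inr E1 E2 in
  equivalence_rel Rl /\
  forall z z', Rl z z' ->
    sobs z = sobs z' /\
    forall (B1 : set (R -> opc E1)) (B2 : set (R -> opc E2)),
      @Gsig E1 B1 -> @Gsig E2 B2 ->
      (forall w w', B1 w -> @Omega E1 w' -> rel_path Rl i1 i1 w w' -> B1 w') ->
      (forall w w', B1 w -> @Omega E2 w' -> rel_path Rl i1 i2 w w' -> B2 w') ->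
      (forall w w', B2 w -> @Omega E1 w' -> rel_path Rl i2 i1 w w' -> B1 w') ->
      (forall w w', B2 w -> @Omega E2 w' -> rel_path Rl i2 i2 w w' -> B2 w') ->
      sprob z B1 B2 = sprob z' B1 B2.

Definition hom_rel (E E' : Type) (f : E -> E') (z z' : E + E') : Prop :=
  match z, z' with
  | inl x, inl x' => f x = f x'
  | inl x, inr y => f x = y
  | inr y, inl x => f x = y
  | inr y, inr y' => y = y'
  end.

From mathcomp Require Import all_boot all_order all_algebra.
From mathcomp Require Import all_classical all_reals all_analysis.
From mathcomp Require Import Rstruct Rstruct_topology lra.

(* Since f is continuous, f o w can fail to be a trajectory only at an
   explosion time of w, where w(t-) = \partial but f(w(u)) may have no limit in
   E'_\partial as u increases to t.  By compactness of E'_\partial such an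
   oscillation has two distinct cluster points, which a countable base of E'
   separates by two basic sets with disjoint closures; visits to open sets just
   before absorption can be read at rational times thanks to right continuity.
   Hence the set G0 of paths w whose image f o w is a trajectory is an event,
   and P^x(G0) = P'^{f x}(Omega') = 1.  On G0 the closure conditions on
   B1, B2 identify {w | f o w \in B2} with B1, so that
   P^x(B1) = P^x(B1 \cap G0) = P'^{f x}(B2), and both the relation and the
   laws factor through the map E + E' -> E' given by f and the identity. *)

Set Implicit Arguments.
Unset Strict Implicit.
Unset Printing Implicit Defensive.
Import Order.TTheory GRing.Theory Num.Theory.
Import numFieldNormedType.Exports.
Local Open Scope classical_set_scope.
Local Open Scope ring_scope.

Section SigmaAlgebraOn.
Variables (T : Type) (D : set T) (M : set (set T)).
Hypotheses (sigmaM : sigma_algebra D M) (subM : forall A, M A -> A `<=` D).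

Lemma sigma_algebra_setI (A B : set T) : M A -> M B -> M (A `&` B).
Proof. by have [_ _ _] := (sigma_algebraP subM).1 sigmaM; apply. Qed.

Lemma sigma_algebra_setD (A B : set T) : M A -> M B -> M (A `\` B).
Proof.
move=> MA MB; have [_ MDC _] := sigmaM.
have -> : A `\` B = A `&` (D `\` B).
  apply/seteqP; split=> [x [Ax nBx]|x [Ax [_ nBx]]] //.
  by split=> //; split=> //; exact: subM MA _ Ax.
exact: sigma_algebra_setI (MDC _ MB).
Qed.

Lemma sigma_algebra_bigcup_count (I : countType) (F : I -> set T) :
  (forall i, M (F i)) -> M (\bigcup_i F i).
Proof.
move=> MF; have [M0 _ MU] := sigmaM.
have -> : \bigcup_i F i = \bigcup_n (if unpickle n is Some i then F i else set0).
  apply/seteqP; split=> x [i _ Fix].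
  - by exists (pickle i) => //; rewrite pickleK.
  - by move: Fix; case: (unpickle i) => // j Fjx; exists j.
by apply: MU => n; case: (unpickle n).
Qed.

Lemma sigma_algebra_bigcap_nat (F : nat -> set T) :
  (forall n, M (F n)) -> M (\bigcap_n F n).
Proof.
move=> MF; have [_ MDC MU] := sigmaM.
have -> : \bigcap_n F n = D `\` \bigcup_n (D `\` F n).
  apply/seteqP; split=> x.
  - by move=> Fx; split; [exact: subM (MF 0%N) _ (Fx 0%N I) | case=> n _ [_]; apply; exact: Fx].
  - by move=> [Dx nUx] n _; apply: contrapT => nFx; apply: nUx; exists n.
by apply: (MDC); apply: MU => n; exact: MDC.
Qed.

Lemma sigma_algebra_guard (P : Prop) (A : set T) :
  (P -> M A) -> M [set x | P /\ A x].
Proof.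
move=> MA; have [M0 _ _] := sigmaM; have [p|np] := pselect P.
- suff -> : [set x | P /\ A x] = A by exact: MA.
  by apply/seteqP; split=> [x []|x Ax].
- suff -> : [set x | P /\ A x] = set0 by [].
  by apply/seteqP; split=> x // [].
Qed.

Variable mu : set T -> \bar R.
Hypothesis mu_prob : prob_measure_on D M mu.

Lemma prob_measure_setU (A B : set T) : M A -> M B -> A `&` B = set0 ->
  mu (A `|` B) = (mu A + mu B)%E.
Proof.
move=> MA MB AB0; have [M0 _ _] := sigmaM; have [mu0 mu_ge0 mu_sigma _] := mu_prob.
rewrite -bigcup2E -mu_sigma; last 2 first.
- by case=> [|[|n]].
- have AB x : A x -> B x -> False by move=> Ax Bx; have : (A `&` B) x by []; rewrite AB0.
  move=> [|[|i]] [|[|j]] _ _ [x /= []] // H1 H2; exfalso.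
  + exact: AB H1 H2.
  + exact: AB H2 H1.
rewrite (nneseries_split (f := fun i => mu (bigcup2 A B i)) 0 2); last first.
  by case=> [|[|n]] _ //=; exact: mu_ge0.
rewrite add0n eseries0 => [|[|[|n]] //].
by rewrite adde0 !big_nat_recr //= big_nil add0e.
Qed.

Lemma prob_measure_setI_full (A B : set T) : M A -> M B -> mu B = 1%E ->
  mu (A `&` B) = mu A.
Proof.
move=> MA MB muB1; have [_ MDC _] := sigmaM; have [_ mu_ge0 _ muD1] := mu_prob.
have MDB := MDC _ MB.
have muDB0 : mu (D `\` B) = 0%E.
  have : mu (B `|` (D `\` B)) = (mu B + mu (D `\` B))%E.
    by apply: prob_measure_setU => //; rewrite setDIK.
  rewrite setDUK ?muB1 ?muD1; last exact: subM.
  by case: (mu (D `\` B)) (mu_ge0 _ MDB) => [r _ [] ?|//|//]; congr (_%:E); lra.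
have MAB : M (A `\` B) by exact: sigma_algebra_setD.
have muAB0 : mu (A `\` B) = 0%E.
  have MDBA : M ((D `\` B) `\` A) by exact: sigma_algebra_setD.
  have : mu ((A `\` B) `|` ((D `\` B) `\` A)) = (mu (A `\` B) + mu ((D `\` B) `\` A))%E.
    apply: prob_measure_setU => //.
    by apply/seteqP; split=> x // [[Ax _] [_ nAx]].
  have -> : (A `\` B) `|` ((D `\` B) `\` A) = D `\` B.
    apply/seteqP; split=> x; first by case=> [[Ax nBx]|[]//]; split=> //; exact: subM MA _ Ax.
    by move=> [Dx nBx]; have [Ax|nAx] := pselect (A x); [left|right].
  by rewrite muDB0 => /esym/eqP; rewrite padde_eq0 ?mu_ge0 // => /andP[/eqP].
have : mu ((A `&` B) `|` (A `\` B)) = (mu (A `&` B) + mu (A `\` B))%E.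
  apply: prob_measure_setU => //; first exact: sigma_algebra_setI.
  by apply/seteqP; split=> x // [[_ Bx] [_ nBx]].
by rewrite setUIDK muAB0 adde0.
Qed.

End SigmaAlgebraOn.

Section TrajectorySigmaAlgebra.
Variable E : topologicalType.

Lemma Gsig_sigma_algebra : sigma_algebra (@Omega E) (@Gsig E).
Proof. exact: smallest_sigma_algebra. Qed.

Lemma Gsig_sub (B : set (R -> opc E)) : Gsig B -> B `<=` @Omega E.
Proof.
move=> GB; apply: (smallest_sub (X := [set B | B `<=` @Omega E]) _ _ GB).
- split=> [w //|A _ w []//|A AO w [n _]]; exact: AO.
- by move=> _ [s [A [_ _ ->]]] w [].
Qed.

Lemma Gsig_Omega : Gsig (@Omega E).
Proof. by rewrite -(setD0 (@Omega E)); apply: sigma_algebraCD; exact: sigma_algebra0. Qed.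

Lemma Gsig_eval (s : R) (A : set (opc E)) : 0 <= s -> borelP A ->
  Gsig (@Omega E `&` (fun w => w s) @^-1` A).
Proof. by move=> s0 bA; apply: sub_sigma_algebra; exists s, A. Qed.

Lemma borelP_open (A : set (opc E)) : open A -> borelP A.
Proof. exact: sub_sigma_algebra. Qed.

Lemma borelP_None : borelP [set None : opc E].
Proof.
have -> : [set None : opc E] = setT `\` (Some @` setT).
  apply/seteqP; split=> [_ -> | [x|] // [_ nS]]; first by split=> // -[].
  by case: nS; exists x.
by apply: sigma_algebraCD; apply: borelP_open; exact: one_point_compactification_open_some openT.
Qed.

End TrajectorySigmaAlgebra.

Lemma second_countable_seq (T : topologicalType) : @second_countable T ->
  exists e : nat -> set T, (forall n, open (e n)) /\
    (forall x U, nbhs x U -> exists n, e n x /\ e n `<=` U).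
Proof.
case=> B /countable_injP[g ginj] [Bopen Bbase].
pose e n := if pselect (exists2 b, B b & g b = n) is left h then projT1 (cid2 h) else set0.
exists e; split.
- move=> n; rewrite /e; case: pselect => [h|_]; last exact: open0.
  by case: (cid2 h) => b Bb _ /=; exact: Bopen.
- move=> x U xU; have [V [BV Vx] VU] := Bbase x U xU.
  exists (g V); rewrite /e; case: pselect => [h|[]]; last by exists V.
  case: (cid2 h) => b Bb gb /=.
  by have -> : b = V by apply: ginj; rewrite ?in_setE.
Qed.

Lemma not_cvg_two_clusters (T : ptopologicalType) (F : set_system T) :
  compact [set: T] -> ProperFilter F -> ~ cvg F ->
  exists l1 l2, [/\ l1 <> l2, cluster F l1 & cluster F l2].
Proof.
move=> Tcompact FF ncF; have [l1 [_ c1]] := Tcompact F FF filterT.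
have [B l1B nFB] : exists2 B, nbhs l1 B & ~ F B.
  apply: contrapT => hn; apply: ncF; apply: (@cvgP _ _ l1) => B l1B.
  by apply: contrapT => nFB; apply: hn; exists B.
pose F2 := filter_from F (fun C => C `&` ~` B).
have FF2 : ProperFilter F2.
  apply: filter_from_proper.
    apply: filter_from_filter; first by exists setT; exact: filterT.
    move=> i j Fi Fj; exists (i `&` j); first exact: filterI.
    by move=> x [[ix jx] nBx].
  move=> C FC; apply: contrapT => hn; apply: nFB; apply: filterS FC => x Cx.
  by apply: contrapT => nBx; apply: hn; exists x.
have [l2 [_ c2]] := Tcompact F2 FF2 filterT.
exists l1, l2; split => //.
- move=> l12; subst l2.
  have F2B : F2 (setT `&` ~` B) by exists setT => //; exact: filterT.
  by have [x [[_ nBx] Bx]] := c2 _ B F2B l1B.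
- move=> A C FA l2C; have F2A : F2 (A `&` ~` B) by exists A.
  by have [x [[Ax _] Cx]] := c2 _ C F2A l2C; exists x.
Qed.

Lemma closure_setC_closure (T : topologicalType) (U : set T) :
  open U -> closure (~` closure U) `<=` ~` U.
Proof.
move=> Uopen; rewrite [X in _ `<=` X](closure_id _).1; last exact: open_closedC.
by apply: closureS => x nclx Ux; apply: nclx; exact: subset_closure.
Qed.

Section OnePointCompactification.
Variable T : topologicalType.
Hypotheses (T_hausdorff : hausdorff_space T) (T_loc_compact : locally_compact [set: T]).

Let opc_hausdorff := one_point_compactification_hausdorff T_loc_compact T_hausdorff.

Lemma opc_regular (x : opc T) (U : set (opc T)) : nbhs x U ->
  exists2 W, nbhs x W & closure W `<=` U.
Proof.
move=> xU; have := @compact_regular _ x _ opc_hausdorff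
  (@one_point_compactification_compact T) filterT.
by move=> /(_ (nbhs_filter x) U xU) [W xW WU]; exists W.
Qed.

Variable e : nat -> set T.
Hypothesis e_open : forall n, open (e n).
Hypothesis e_base : forall x U, nbhs x U -> exists n, e n x /\ e n `<=` U.

Definition nested_basic (m n : nat) :=
  closure (Some @` e m : set (opc T)) `<=` Some @` e n.

Lemma nested_basic_separate (P : T) (Q : opc T) : Q <> Some P ->
  exists m n, [/\ nested_basic m n, e m P & nbhs Q (~` closure (Some @` e n : set (opc T)))].
Proof.
move=> QP; have [U [V [PU QV UV]]] : exists U V, [/\ nbhs (Some P : opc T) U, nbhs Q V &
    forall x, U x -> V x -> False].
  apply: contrapT => nUV; apply: QP; apply/esym/opc_hausdorff => U V PU QV.
  apply: contrapT => nUV'; apply: nUV; exists U, V; split=> // x Ux Vx.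
  by apply: nUV'; exists x.
have [n [en enU]] := e_base (PU : nbhs P (Some @^-1` U)).
have QA : nbhs Q (~` closure (Some @` e n : set (opc T))).
  apply: open_nbhs_nbhs; split; first exact/closed_openC/closed_closure.
  move=> cl; have [_ [[y ey <-] Vy]] := cl V QV.
  exact: UV (Some y) (enU _ ey) Vy.
have [W PW clW] : exists2 W, nbhs (Some P : opc T) W & closure W `<=` Some @` e n.
  apply: opc_regular; apply: open_nbhs_nbhs; split; last by exists P.
  exact: one_point_compactification_open_some (e_open n).
have [m [em emW]] := e_base (PW : nbhs P (Some @^-1` W)).
exists m, n; split=> //.
by apply: subset_trans clW; apply: closureS => _ [y ey <-]; exact: emW.
Qed.

End OnePointCompactification.

Lemma at_right_interval (K : realFieldType) (t : K) (P : K -> Prop) :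
  (\forall u \near t^'+, P u) -> exists2 d : K, 0 < d & forall u, t < u < t + d -> P u.
Proof.
rewrite near_withinE => /nbhs_ballP[d d0 hd]; exists d => // u /andP[tu ud].
by apply: hd => //; rewrite /ball /= distrC ger0_norm; lra.
Qed.

Lemma at_left_interval (K : realFieldType) (t : K) (P : K -> Prop) :
  (\forall u \near t^'-, P u) -> exists2 d : K, 0 < d & forall u, t - d < u < t -> P u.
Proof.
rewrite near_withinE => /nbhs_ballP[d d0 hd]; exists d => // u /andP[tu ut].
by apply: hd => //; rewrite /ball /= ger0_norm; lra.
Qed.

Lemma closure_left_visits (T : topologicalType) (g : R -> T) (tau : R) (A : set T) (l : T) :
  g @ tau^'- --> l ->
  (forall k : nat, exists r, tau - k.+1%:R^-1 <= r < tau /\ A (g r)) ->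
  closure A l.
Proof.
move=> gl visits B lB; have [d d0 hd] := at_left_interval (gl B lB).
have [k _ /(_ k (leqnn k)) kd] := near_infty_natSinv_lt (PosNum d0).
have [r [/andP[r1 r2] Ar]] := visits k.
exists (g r); split=> //; apply: hd; rewrite r2 andbT.
by apply: lt_le_trans r1; rewrite ltrD2l ltrN2.
Qed.

Section Trajectories.
Variable E : topologicalType.
Implicit Types w : R -> opc E.

Lemma traj_absorbed w (t u : R) : Omega w -> 0 <= t -> w t = None -> t <= u -> w u = None.
Proof. by move=> [_ _ _ absorb] t0 wt tu; apply: absorb (or_intror wt) _ tu. Qed.

Lemma traj_cvg_left w (t : R) : Omega w -> 0 <= t -> cvg (w @ t^'-).
Proof.
move=> [wneg _ wleft _]; rewrite le_eqVlt => /orP[/eqP<-|]; last exact: wleft.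
apply: (@cvgP _ _ (w 0)); apply: cvg_near_cst; near=> u.
by apply: wneg; near: u; exact: nbhs_left_lt.
Unshelve. all: by end_near. Qed.

Lemma traj_live_right w (t : R) : Omega w -> 0 <= t -> w t <> None ->
  exists2 d : R, 0 < d & forall u, t < u < t + d -> w u <> None.
Proof.
move=> [_ wright _ _] t0; case wt: (w t) => [a|] // _.
have /at_right_interval[d d0 hd] : \forall u \near t^'+, (Some @` setT : set (opc E)) (w u).
  apply: (wright _ t0 (Some @` setT)); apply: open_nbhs_nbhs; split; last by rewrite wt; exists a.
  exact: one_point_compactification_open_some openT.
by exists d => // u /hd[x _ <-].
Qed.

Lemma first_absorption_time w (r : R) : Omega w -> 0 <= r -> w r = None ->
  exists tau : R, [/\ 0 <= tau, w tau = None & forall t, 0 <= t < tau -> w t <> None].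
Proof.
move=> Ow r0 wr; pose S := [set t : R | 0 <= t /\ w t = None].
have S_inf : has_inf S by split; [exists r | exists 0 => t []].
have tau0 : 0 <= inf S by apply: lb_le_inf; [exists r | move=> t []].
exists (inf S); split=> //; last first.
  by move=> t /andP[t0 tlt] wt; have := ge_inf S_inf.2 (conj t0 wt); lra.
apply: contrapT => wlive; have [d d0 live] := traj_live_right Ow tau0 wlive.
have [s [s0 ws] sd] := inf_adherent d0 S_inf.
have := ge_inf S_inf.2 (conj s0 ws); rewrite le_eqVlt => /orP[/eqP ss|slt].
  by rewrite -ss in ws.
by apply: (live s _ ws); rewrite slt sd.
Qed.

End Trajectories.

Section LiftedPaths.
Variables (E E' : topologicalType) (f : E -> E').
Hypothesis f_cont : continuous f.
Implicit Types w : R -> opc E.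
Local Notation L := (lift_path f).

Lemma cvg_omap {U : Type} {F : set_system U} (g : U -> opc E) (a : E) :
  g @ F --> (Some a : opc E) -> omap f \o g @ F --> (Some (f a) : opc E').
Proof. by move=> ga W fW; apply: (ga (omap f @^-1` W)); exact: f_cont fW. Qed.

Lemma lift_cvg_right w (t : R) : Omega w -> 0 <= t -> L w @ t^'+ --> L w t.
Proof.
move=> Ow t0; have [_ wright _ _] := Ow; rewrite /lift_path.
case wt: (w t) => [a|] /=; first by apply: cvg_omap; rewrite -wt; exact: wright.
apply: cvg_near_cst; near=> u.
by rewrite (traj_absorbed Ow t0 wt) //; apply/ltW; near: u; exact: nbhs_right_gt.
Unshelve. all: by end_near. Qed.

Hypotheses (E'_hausdorff : hausdorff_space E') (E'_loc_compact : locally_compact [set: E']).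

Lemma lift_lim_left_None w (t : R) : Omega w -> 0 <= t ->
  lim (L w @ t^'-) = None -> lim (w @ t^'-) = None.
Proof.
move=> Ow t0; case wl: (lim (w @ t^'-)) => [a|] // Ll.
have : L w @ t^'- --> (Some (f a) : opc E').
  by apply: cvg_omap; rewrite -wl; exact: traj_cvg_left.
move/(cvg_lim (one_point_compactification_hausdorff E'_loc_compact E'_hausdorff)).
by rewrite Ll.
Qed.

Lemma lift_traj w : Omega w -> (forall t : R, 0 < t -> cvg (L w @ t^'-)) -> Omega (L w).
Proof.
move=> Ow Lleft; have [wneg _ _ wabsorb] := Ow.
split=> [t t0|t t0|//|t t0 [Ll|Lwt] u tu].
- by rewrite /lift_path wneg.
- exact: lift_cvg_right.
- by rewrite /lift_path (wabsorb t t0 (or_introl (lift_lim_left_None Ow t0 Ll))).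
- have wt : w t = None by move: Lwt; rewrite /lift_path; case: (w t).
  by rewrite /lift_path (traj_absorbed Ow t0 wt tu).
Qed.

End LiftedPaths.

Section Oscillation.
Variables (E E' : topologicalType) (f : E -> E').
Hypothesis f_cont : continuous f.
Variable e : nat -> set E'.
Hypothesis e_open : forall n, open (e n).
Implicit Types (w : R -> opc E) (A : set (opc E')).
Local Notation L := (lift_path f).

Definition live_preimage A : set (opc E) := Some @` (f @^-1` (Some @^-1` A)).

(* Rational times make [visits_near_death A] an event; by right continuity and
   absorption it says that [L w] enters [A] in every left neighbourhood of the
   death time of [w]. *)
Definition visit_then_die A (k : nat) (q : rat) : set (R -> opc E) :=
  [set w | [/\ (0 : R) <= ratr q, live_preimage A (w (ratr q))
             & w (ratr q + k.+1%:R^-1) = None]].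

Definition visits_near_death A : set (R -> opc E) :=
  \bigcap_k \bigcup_q visit_then_die A k q.

Definition oscillates_at_death : set (R -> opc E) :=
  \bigcup_m \bigcup_n [set w | nested_basic e m n /\
    (visits_near_death (Some @` e m) `&`
     visits_near_death (~` closure (Some @` e n : set (opc E')))) w].

Lemma live_preimageP A (x : opc E) : live_preimage A x -> x <> None /\ A (omap f x).
Proof. by case=> a Aa <-. Qed.

Lemma visits_before_absorption w (tau : R) A : Omega w -> 0 <= tau -> w tau = None ->
  (forall t, 0 <= t < tau -> w t <> None) -> visits_near_death A w ->
  forall k : nat, exists r, [/\ 0 <= r, tau - k.+1%:R^-1 <= r < tau & A (L w r)].
Proof.
move=> Ow tau0 wtau live vis k; have [q _ [q0 /live_preimageP[wq Aq] wdead]] := vis k I.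
exists (ratr q); split=> //; apply/andP; split.
- rewrite lerBlDr leNgt; apply/negP => qk; apply: (live _ _ wdead); rewrite qk andbT.
  by rewrite addr_ge0 // invr_ge0.
- by rewrite ltNge; apply/negP => tauq; apply: wq; exact: traj_absorbed Ow tau0 wtau tauq.
Qed.

Lemma oscillation_not_lift_traj w : Omega w -> oscillates_at_death w -> ~ Omega (L w).
Proof.
move=> Ow [m _ [n _ [nest [vis1 vis2]]]] OL.
have [q _ [q0 _ wdead]] := vis1 0%N I.
have dead0 : (0 : R) <= ratr q + 1%:R^-1 by rewrite addr_ge0 // invr_ge0.
have [tau [tau0 wtau live]] := first_absorption_time Ow dead0 wdead.
have visits := visits_before_absorption Ow tau0 wtau live.
have tau_gt0 : 0 < tau by have [r [r0 /andP[_ rtau] _]] := visits _ vis1 0%N; lra.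
have [_ _ Lleft _] := OL; have Lcvg := Lleft tau tau_gt0.
have cl A : visits_near_death A w -> closure A (lim (L w @ tau^'-)).
  move=> visA; apply: (closure_left_visits Lcvg) => k.
  by have [r [_ rk Ar]] := visits _ visA k; exists r.
apply: (closure_setC_closure _ (cl _ vis2)); last exact/nest/cl.
exact: one_point_compactification_open_some.
Qed.

Lemma lift_not_cvg_left w (t : R) : Omega w -> 0 < t -> ~ cvg (L w @ t^'-) ->
  (forall u, u < t -> w u <> None) /\ (forall u, t <= u -> w u = None).
Proof.
move=> Ow t0 nc; have [wneg _ _ wabsorb] := Ow; split.
- move=> u ut wu; wlog u0 : u ut wu / 0 <= u.
    move=> H; have [u0|/wneg wu0] := leP 0 u; first exact: H u0.
    by apply: (H 0) => //; rewrite -wu0.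
  apply: nc; apply: (@cvgP _ _ (None : opc E')); apply: cvg_near_cst; near=> v.
  by rewrite /lift_path (traj_absorbed Ow u0 wu) //; near: v; exact: nbhs_left_ge.
- case wl: (lim (w @ t^'-)) => [a|]; last exact: wabsorb (ltW t0) (or_introl wl).
  case: nc; apply: (@cvgP _ _ (Some (f a) : opc E')); apply: cvg_omap => //.
  by rewrite -wl; apply: traj_cvg_left => //; exact: ltW.
Unshelve. all: by end_near. Qed.

Lemma cluster_visits_near_death w (t : R) (l : opc E') A : Omega w -> 0 < t ->
  (forall u, u < t -> w u <> None) -> (forall u, t <= u -> w u = None) ->
  cluster (L w @ t^'-) l -> open A -> A l -> visits_near_death A w.
Proof.
move=> Ow t0 live dead cl Aopen Al k _.
pose d := Order.min t (k.+1%:R^-1 : R).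
have d0 : 0 < d by rewrite lt_min t0 invr_gt0 ltr0n.
have dk : d <= k.+1%:R^-1 by rewrite ge_min lexx orbT.
have near_t : (L w @ t^'-) (L w @` [set u | t - d < u < t]).
  apply: (@filterS _ _ _ [set u | t - d < u < t]) => [u ud|]; first by exists u.
  near=> u; apply/andP; split; near: u; last exact: nbhs_left_lt.
  by apply: nbhs_left_gt; rewrite gtrBl.
have [_ [[u /andP[u1 u2] <-] Au]] := cl _ A near_t (open_nbhs_nbhs (conj Aopen Al)).
have dt : d <= t by rewrite ge_min lexx.
have u0 : 0 <= u by lra.
have [eps eps0 Aright] : exists2 eps : R, 0 < eps & forall v, u < v < u + eps -> A (L w v).
  by apply: at_right_interval; apply: (lift_cvg_right f_cont Ow u0); exact: open_nbhs_nbhs.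
have [q] := @rat_in_itvoo _ u (Order.min (u + eps) t) (ltac:(rewrite lt_min u2 andbT; lra)).
rewrite in_itv /= lt_min => /andP[uq /andP[q1 q2]].
exists q => //; split.
- lra.
- case wq: (w (ratr q)) (live _ q2) => [a|] // _; exists a => //.
  by have := Aright (ratr q); rewrite /lift_path wq; apply; rewrite uq q1.
- have := dead (ratr q + k.+1%:R^-1); apply.
  by apply: le_trans (_ : ratr q + d <= _); [lra | rewrite lerD2l].
Unshelve. all: by end_near. Qed.

Hypotheses (E'_hausdorff : hausdorff_space E') (E'_loc_compact : locally_compact [set: E']).
Hypothesis e_base : forall x U, nbhs x U -> exists n, e n x /\ e n `<=` U.

Lemma not_lift_traj_oscillation w : Omega w -> ~ Omega (L w) -> oscillates_at_death w.
Proof.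
move=> Ow nOL.
have [t [t0 nc]] : exists t : R, 0 < t /\ ~ cvg (L w @ t^'-).
  apply: contrapT => allc; apply/nOL/(lift_traj f_cont E'_hausdorff E'_loc_compact Ow) => t t0.
  by apply: contrapT => nc; apply: allc; exists t.
have [live dead] := lift_not_cvg_left Ow t0 nc.
have [l1 [l2 [l12 c1 c2]]] := not_cvg_two_clusters
  (@one_point_compactification_compact E') (fmap_proper_filter (L w) (at_left_proper_filter t)) nc.
wlog [P l1P] : l1 l2 l12 c1 c2 / exists P, l1 = Some P.
  move=> H; case: l1 l12 c1 => [P|] l12 c1; first exact: H l12 c1 c2 (ex_intro _ P erefl).
  case: l2 l12 c2 => [P|//] l12 c2.
  exact: H (nesym l12) c2 c1 (ex_intro _ P erefl).
subst l1; have [m [n [nest emP QA]]] :=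
  nested_basic_separate E'_hausdorff E'_loc_compact e_open e_base (nesym l12).
exists m => //; exists n => //; split=> //; split.
- apply: (cluster_visits_near_death Ow t0 live dead c1); last by exists P.
  exact: one_point_compactification_open_some.
- apply: (cluster_visits_near_death Ow t0 live dead c2 _ (nbhs_singleton QA)).
  exact/closed_openC/closed_closure.
Qed.

End Oscillation.

Section LiftedTrajectoriesMeasurable.
Variables (E E' : topologicalType) (f : E -> E').
Hypotheses (f_cont : continuous f) (E'_hausdorff : hausdorff_space E').
Hypothesis E'_loc_compact : locally_compact [set: E'].
Variable e : nat -> set E'.
Hypothesis e_open : forall n, open (e n).
Hypothesis e_base : forall x U, nbhs x U -> exists n, e n x /\ e n `<=` U.
Local Notation L := (lift_path f).
Local Notation Omega_E := (@Omega E).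
Let Gsig_sa := Gsig_sigma_algebra E.
Let Gsig_setI := sigma_algebra_setI Gsig_sa (@Gsig_sub E).

Lemma open_live_preimage (A : set (opc E')) : open A -> open (live_preimage f A).
Proof.
move=> Aopen; apply: one_point_compactification_open_some.
apply: open_comp => [x _|]; first exact: f_cont.
apply: (@open_comp E' (opc E') Some A) => // x _.
exact: one_point_compactification_some_continuous.
Qed.

Lemma Gsig_visits_near_death (A : set (opc E')) : open A ->
  Gsig (Omega_E `&` visits_near_death f A).
Proof.
move=> Aopen.
have -> : Omega_E `&` visits_near_death f A =
    \bigcap_k \bigcup_q (Omega_E `&` visit_then_die f A k q).
  apply/seteqP; split=> [w [Ow vis] k _|w vis].
    by have [q _ vq] := vis k I; exists q.
  split; first by have [q _ []] := vis 0%N I.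
  by move=> k _; have [q _ [_ vq]] := vis k I; exists q.
apply: (sigma_algebra_bigcap_nat Gsig_sa (@Gsig_sub E)) => k.
apply: (sigma_algebra_bigcup_count Gsig_sa) => q.
have -> : Omega_E `&` visit_then_die f A k q = [set w | (0 : R) <= ratr q /\
    ((Omega_E `&` (fun w => w (ratr q)) @^-1` live_preimage f A) `&`
     (Omega_E `&` (fun w => w (ratr q + k.+1%:R^-1)) @^-1` [set None])) w].
  apply/seteqP; split=> [w [Ow [q0 lq dq]]|w [q0 [[Ow lq] [_ dq]]]].
  - exact: conj q0 (conj (conj Ow lq) (conj Ow dq)).
  - exact: conj Ow (And3 q0 lq dq).
apply: (sigma_algebra_guard Gsig_sa) => q0.
apply: Gsig_setI; apply: Gsig_eval.
- exact: q0.
- by apply: borelP_open; apply: open_live_preimage.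
- by rewrite addr_ge0 // invr_ge0.
- exact: borelP_None.
Qed.

Lemma Gsig_oscillates_at_death : Gsig (Omega_E `&` oscillates_at_death f e).
Proof.
have -> : Omega_E `&` oscillates_at_death f e = \bigcup_m \bigcup_n [set w |
    nested_basic e m n /\
    ((Omega_E `&` visits_near_death f (Some @` e m)) `&`
     (Omega_E `&` visits_near_death f (~` closure (Some @` e n : set (opc E'))))) w].
  apply/seteqP; split=> [w [Ow [m _ [n _ [nest [v1 v2]]]]]|].
    by exists m => //; exists n.
  by move=> w [m _ [n _ [nest [[Ow v1] [_ v2]]]]]; split=> //; exists m => //; exists n.
apply: (sigma_algebra_bigcup_count Gsig_sa) => m.
apply: (sigma_algebra_bigcup_count Gsig_sa) => n.
apply: (sigma_algebra_guard Gsig_sa) => _.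
apply: Gsig_setI; apply: Gsig_visits_near_death.
- exact: one_point_compactification_open_some.
- exact/closed_openC/closed_closure.
Qed.

Lemma lift_trajE : [set w | Omega w /\ Omega (L w)] =
  Omega_E `\` (Omega_E `&` oscillates_at_death f e).
Proof.
apply/seteqP; split=> [w [Ow OL]|w [Ow nosc]].
- by split=> // -[_ osc]; apply: (oscillation_not_lift_traj e_open Ow osc OL).
split=> //; apply: contrapT => nOL; apply: nosc; split=> //.
apply: (not_lift_traj_oscillation f_cont e_open E'_hausdorff E'_loc_compact e_base Ow nOL).
Qed.

Lemma Gsig_lift_traj : Gsig [set w | Omega w /\ Omega (L w)].
Proof.
have [_ GsigD _] := Gsig_sa.
by rewrite lift_trajE; apply: GsigD; exact: Gsig_oscillates_at_death.
Qed.

End LiftedTrajectoriesMeasurable.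

Section Homomorphism.
Variables (E E' : topologicalType) (AP : finType).
Variables (X : FDProcess E AP) (X' : FDProcess E' AP) (f : E -> E').
Hypothesis f_hom : FD_hom X X' f.
Local Notation L := (lift_path f).

Lemma Px_lift_traj (x : E) : Px X (Some x) [set w | Omega w /\ Omega (L w)] = 1%E.
Proof.
have [_ _ Px_lift] := f_hom; rewrite -Px_lift; last exact: Gsig_Omega.
by have [_ _ _ ->] := Px_prob X' (Some (f x)).
Qed.

Lemma rel_path_lift (w : R -> opc E) :
  rel_path (hom_rel f) inl inr w (L w) /\ rel_path (hom_rel f) inr inl (L w) w.
Proof. by split=> t _; rewrite /lift_path; case: (w t). Qed.

Lemma Px_hom_related (x : E) (B1 : set (R -> opc E)) (B2 : set (R -> opc E')) :
  Gsig B1 -> Gsig B2 ->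
  (forall w w', B1 w -> Omega w' -> rel_path (hom_rel f) inl inr w w' -> B2 w') ->
  (forall w w', B2 w -> Omega w' -> rel_path (hom_rel f) inr inl w w' -> B1 w') ->
  Px X (Some x) B1 = Px X' (Some (f x)) B2.
Proof.
move=> GB1 GB2 B1B2 B2B1; have [f_cont _ Px_lift] := f_hom.
have [e [e_open e_base]] := second_countable_seq (fd_second_countable X').
have G_lift := Gsig_lift_traj f_cont (fd_hausdorff X') (fd_loc_compact X') e_open e_base.
rewrite Px_lift //.
have -> : [set w | Omega w /\ B2 (L w)] = B1 `&` [set w | Omega w /\ Omega (L w)].
  apply/seteqP; split=> [w [Ow B2L]|w [B1w [Ow OL]]].
  - split; first exact: B2B1 B2L Ow (rel_path_lift w).2.
    by split=> //; exact: Gsig_sub GB2 _ B2L.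
  - by split=> //; exact: B1B2 B1w OL (rel_path_lift w).1.
by rewrite (prob_measure_setI_full (Gsig_sigma_algebra E) (@Gsig_sub E) (Px_prob X _)
  GB1 G_lift (Px_lift_traj x)).
Qed.

End Homomorphism.

Definition to_target (E E' : Type) (f : E -> E') (z : E + E') : E' :=
  match z with inl x => f x | inr y => y end.

Lemma hom_relE (E E' : Type) (f : E -> E') (z z' : E + E') :
  hom_rel f z z' <-> to_target f z = to_target f z'.
Proof. by case: z z' => [x|y] [x'|y'] /=; split=> ->. Qed.

Theorem mainTheorem4 (E E' : topologicalType) (AP : finType)
    (X : FDProcess E AP) (X' : FDProcess E' AP) (f : E -> E') :
  FD_hom X X' f -> bisimulation X X' (hom_rel f).
Proof.
move=> f_hom; have [_ obs_hom _] := f_hom; rewrite /bisimulation /=; split.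
  by split=> [z|z z'|z z' z'']; rewrite !hom_relE // => ->.
move=> z z' /hom_relE zz'; split.
  by move: zz'; case: z z' => [x|y] [x'|y'] /=; rewrite ?obs_hom => ->.
move=> B1 B2 GB1 GB2 _ B1B2 B2B1 _.
have Px_target (u : E + E') :
    match u with inl x => Px X (Some x) B1 | inr y => Px X' (Some y) B2 end =
    Px X' (Some (to_target f u)) B2.
  by case: u => [x|y] //; exact: Px_hom_related.
by rewrite !Px_target zz'.
Qed.
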